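(* Let $K$ be an admissible kernel on $X\times Y$ and let $C_K\in\mathbb{R}$ be its constant, i.e. $\int_X K(x,y)\,dm_X(x)=C_K$ for all $y\in Y$. Let $\mu$ be a Borel probability measure on $Y$ and $c\in\mathbb{R}$, and suppose that $U_K^\mu(x)=c$ for all $x\in X$. Then $c=C_K$.
   Context: $(X,d_X)$ and $(Y,d_Y)$ are compact metric spaces and $G$ is a compact topological group acting isometrically and transitively on both $X$ and $Y$. $m_X$ and $m_Y$ denote the unique $G$-invariant Radon (Borel) probability measures on $X$ and $Y$. A Borel measurable $K:X\times Y\to\mathbb{R}\cup\{-\infty\}$ is an admissible kernel if: (i) there is $B_K\in[0,\infty)$ with $-\infty\le K(x,y)\le B_K$ for all $x,y$; (ii) $\int_X|K(x,y)|\,dm_X(x)<\infty$ for every $y\in Y$; (iii) for every $y$, $K(\cdot,y)$ is upper semi-continuous; (iv) $K(g(x),y)=K(x,g^{-1}(y))$ for all $g\in G,x\in X,y\in Y$. For an admissible kernel the integral $\int_X K(x,y)\,dm_X(x)$ is independent of $y$; this common value is the constant $C_K$. For a Borel probability measure $\mu$ on $Y$, the potential function is $U_K^\mu(x)=\int_Y K(x,y)\,d\mu(y)$, $x\in X$. *)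

From HB Require Import structures.
From mathcomp Require Import all_boot all_order all_algebra.
From mathcomp Require Import all_classical all_reals all_analysis.
From mathcomp Require Import measurable_realfun.

Set Implicit Arguments.
Unset Strict Implicit.
Unset Printing Implicit Defensive.

Import Order.TTheory GRing.Theory Num.Theory.
Import numFieldNormedType.Exports.

Local Open Scope classical_set_scope.
Local Open Scope ring_scope.

(* Metric spaces with a distinguished point (MathComp-Analysis measurable
   spaces must be pointed; this is harmless here since X and Y carry
   probability measures and are therefore nonempty). *)
#[short(type="pmetricType")]
HB.structure Definition PointedMetric (K : numDomainType) :=
  { M of Pointed M & Metric K M }.

HB.instance Definition _ (X Y : ptopologicalType) := Pointed.on (X * Y)%type.

Notation borel T := (g_sigma_algebraType (@open T)).

Definition is_group (G : Type) (mul : G -> G -> G) (inv : G -> G) (one : G) :=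
  [/\ forall a b c, mul a (mul b c) = mul (mul a b) c,
      forall a, mul one a = a,
      forall a, mul a one = a,
      forall a, mul (inv a) a = one
    & forall a, mul a (inv a) = one].

Definition compact_topological_group (G : topologicalType)
    (mul : G -> G -> G) (inv : G -> G) (one : G) :=
  [/\ is_group mul inv one,
      continuous (fun p : G * G => mul p.1 p.2),
      continuous inv
    & compact [set: G]].

Definition group_action (G X : topologicalType) (mul : G -> G -> G) (one : G)
    (act : G -> X -> X) :=
  [/\ forall x, act one x = x,
      forall g h x, act (mul g h) x = act g (act h x)
    & continuous (fun p : G * X => act p.1 p.2)].

Definition isometric_transitive {R : realType} (G : Type) (X : metricType R)
    (act : G -> X -> X) :=
  (forall g x x', mdist (act g x) (act g x') = mdist x x') /\
  (forall x x', exists g, act g x = x').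

(* Radon property of a finite Borel measure on a Hausdorff space X: inner
   regular by compact sets and outer regular by open sets on Borel sets
   (local finiteness is automatic for a finite measure). *)
Definition radon {R : realType} (X : ptopologicalType)
    (m : set (borel X) -> \bar R) :=
  forall A : set (borel X), measurable A ->
    m A = ereal_sup [set m C | C in [set C : set X | compact C /\ C `<=` A]]
 /\ m A = ereal_inf [set m U | U in [set U : set X | open U /\ A `<=` U]].

Definition invariant_measure {R : realType} (G : Type) (X : ptopologicalType)
    (act : G -> X -> X) (m : set (borel X) -> \bar R) :=
  forall g (A : set (borel X)), measurable A -> m (act g @^-1` A) = m A.

Definition usc (X : topologicalType) {R : realType} (f : X -> \bar R) :=
  forall a : R, open [set x | (f x < a%:E)%E].

Definition admissible_kernel {R : realType} (G : Type) (inv : G -> G)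
    (X Y : pmetricType R) (actX : G -> X -> X) (actY : G -> Y -> Y)
    (mX : set (borel X) -> \bar R) (K : X -> Y -> \bar R) :=
  [/\
      measurable_fun [set: borel (X * Y)%type]
        (fun p : borel (X * Y)%type => K p.1 p.2),
      (exists2 B : R, 0 <= B & forall x y, (K x y <= B%:E)%E),
      (forall y, (\int[mX]_x `|K x y| < +oo)%E),
      (forall y, usc (fun x : X => K x y))
    &
      (forall g x y, K (actX g x) y = K x (actY (inv g) y))].

From HB Require Import structures.
From mathcomp Require Import all_boot all_order all_algebra.
From mathcomp Require Import all_classical all_reals all_analysis.
From mathcomp Require Import measurable_realfun.

Import Order.TTheory GRing.Theory Num.Theory.
Import numFieldNormedType.Exports.

Local Open Scope classical_set_scope.
Local Open Scope ring_scope.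

(* Since K is bounded above by B, the function B - K is nonnegative on X x Y,
   so Tonelli's theorem computes its integral against mX (x) mu in both orders.
   Integrating first in y gives B - c for every x, integrating first in x gives
   B - C_K for every y, hence B - c = B - C_K. The only technical point is that
   K is Borel on the product topology while Tonelli needs measurability for the
   product sigma-algebra; the two agree because compact metric spaces are
   second countable. *)

Lemma countable_bigcup_measurable d (T : sigmaRingType d) I (S : set I)
    (F : I -> set T) :
  countable S -> (forall i, S i -> measurable (F i)) ->
  measurable (\bigcup_(i in S) F i).
Proof.
move=> /pfcard_geP[->|[g]] SF; first by rewrite bigcup_set0; exact: measurable0.
rewrite (reindex_bigcup g setT); [|exact: funS|exact: surj].
by apply: bigcupT_measurable => n; apply: SF; exact: funS.
Qed.

Lemma open_measurable_prod (X Y : ptopologicalType) (U : set (X * Y)) :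
  @second_countable X -> @second_countable Y -> open U ->
  measurable (U : set (borel X * borel Y)%type).
Proof.
move=> [BX cBX [BXo BXx]] [BY cBY [BYo BYy]] oU.
pose S := (BX `*` BY) `&` (fun AB : set X * set Y => AB.1 `*` AB.2 `<=` U).
have -> : U = \bigcup_(p in S) (p.1 `*` p.2).
  apply/seteqP; split; last by move=> p [AB [_ ABU]]; exact: ABU.
  move=> [x y] /oU [[A' B'] /= [A'x B'y] A'B'U].
  have [A [BXA Ax] AA'] := BXx x A' A'x.
  have [B [BYB By] BB'] := BYy y B' B'y.
  exists (A, B) => //; split=> //= -[u v] [/AA' ? /BB' ?]; exact: A'B'U.
apply: countable_bigcup_measurable.
  exact: sub_countable (subset_card_le (@subIsetl _ _ _)) (countableX cBX cBY).
move=> [A B] [[/BXo oA /BYo oB] _]; apply: measurableX; exact: sub_sigma_algebra.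
Qed.

Lemma measurable_fun_borel_prod (X Y : ptopologicalType) d (T : measurableType d)
    (f : X * Y -> T) :
  @second_countable X -> @second_countable Y ->
  measurable_fun [set: borel (X * Y)%type] (f : borel (X * Y)%type -> T) ->
  measurable_fun [set: (borel X * borel Y)%type] (f : (borel X * borel Y)%type -> T).
Proof.
move=> sX sY mf _ A mA; have := mf measurableT A mA.
apply: smallest_sub; first exact: sigma_algebra_measurable.
by move=> U; exact: open_measurable_prod.
Qed.

Section integral_ub.
Local Open Scope ereal_scope.
Context d (T : measurableType d) (R : realType).

Lemma integrable_ub_fin_integral (mu : {finite_measure set T -> \bar R})
    (f : T -> \bar R) (B r : R) :
  measurable_fun setT f -> (forall x, f x <= B%:E) -> \int[mu]_x f x = r%:E ->
  mu.-integrable setT f.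
Proof.
move=> mf fB fr.
have fposB : \int[mu]_x f^\+ x < +oo.
  apply: (@le_lt_trans _ _ (\int[mu]_x (Num.max B 0)%:E)).
    apply: ge0_le_integral => //; first exact: measurable_funepos.
    by move=> x _; rewrite funeposE ge_max lee_fin le_max lexx orbT andbT
      (le_trans (fB x)) // lee_fin le_max lexx.
  rewrite integral_cst // lte_mul_pinfty ?lee_fin ?le_max ?lexx ?orbT //.
  by rewrite -ge0_fin_numE // fin_num_measure.
have fpos0 : 0 <= \int[mu]_x f^\+ x by apply: integral_ge0.
have fneg : \int[mu]_x f^\- x < +oo.
  rewrite ltey; apply/eqP => fneg_oo; move: fr; rewrite integralE fneg_oo.
  by move: fpos0 fposB; case: (\int[mu]_x f^\+ x).
apply/integrableP; split => //.
rewrite -[fun x => _]/(abse \o f) fune_abse ge0_integralD //.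
- by rewrite lte_add_pinfty.
- exact: measurable_funepos.
- exact: measurable_funeneg.
Qed.

Lemma probability_integral_cstB (P : probability T R) (f : T -> \bar R) (B r : R) :
  measurable_fun setT f -> (forall x, f x <= B%:E) -> \int[P]_x f x = r%:E ->
  \int[P]_x (B%:E - f x) = (B - r)%:E.
Proof.
move=> mf fB fr.
rewrite (_ : (fun x => B%:E - f x) = (EFin \o cst B) \- f) //.
rewrite integralB //; last 2 first.
- exact: finite_measure_integrable_cst.
- exact: integrable_ub_fin_integral fB fr.
rewrite fr /= integral_cst //.
by rewrite [m in _ * m]probability_setT mule1.
Qed.

End integral_ub.

Theorem lemma4p4 (R : realType) (X Y : pmetricType R) (G : topologicalType)
    (mul : G -> G -> G) (inv : G -> G) (one : G)
    (actX : G -> X -> X) (actY : G -> Y -> Y)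
    (mX : probability (borel X) R) (mY : probability (borel Y) R)
    (K : X -> Y -> \bar R) (C_K : R)
    (mu : probability (borel Y) R) (c : R) :
  compact [set: X] -> compact [set: Y] ->
  compact_topological_group mul inv one ->
  group_action mul one actX -> group_action mul one actY ->
  isometric_transitive actX -> isometric_transitive actY ->
  radon mX -> invariant_measure actX mX ->
  radon mY -> invariant_measure actY mY ->
  admissible_kernel inv actX actY mX K ->
  (forall y : Y, (\int[mX]_x K x y)%E = C_K%:E) ->
  (forall x : X, (\int[mu]_y K x y)%E = c%:E) ->
  c = C_K.
Proof.
move=> cX cY _ _ _ _ _ _ _ _ _ [mK [B _ KB] _ _ _] KX Kmu.
have mK2 : measurable_fun [set: (borel X * borel Y)%type]
    (fun p : X * Y => K p.1 p.2).
  exact: measurable_fun_borel_prod (compact_second_countable cX)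
    (compact_second_countable cY) mK.
pose f (p : borel X * borel Y) := (B%:E - K p.1 p.2)%E.
have mf : measurable_fun [set: (borel X * borel Y)%type] f.
  by apply: emeasurable_funB => //; exact: measurable_cst.
have f0 p : (0 <= f p)%E by rewrite /f sube_ge0 ?KB // orbT.
have := @fubini_tonelli _ _ _ _ _ mX mu f mf f0.
rewrite (eq_integral (fun _ => (B - c)%:E)); last first.
  by move=> x _; apply: probability_integral_cstB (Kmu x) => //;
    exact: (measurable_fun_pair2 x mK2).
rewrite [in RHS](eq_integral (fun _ => (B - C_K)%:E)); last first.
  by move=> y _; apply: probability_integral_cstB (KX y) => //;
    exact: (measurable_fun_pair1 y mK2).
rewrite !integral_cst // [m in (_ * m)%E = _]probability_setT.
by rewrite [m in _ = (_ * m)%E]probability_setT !mule1 => -[] /addrI /oppr_inj.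
Qed.
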